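(* Assume $n\ge 3t+1$. In any execution of COOL, if $\eta^{[2]}\ge 1$, then for every honest processor $i$ with $s^{[2]}_i=1$, the number of honest processors $j$ with $\boldsymbol w_j=\boldsymbol w_i$ is at least $n-9t/4$. (Equivalently, each of the $\eta^{[2]}$ initial messages counted by $\eta^{[2]}$ is held by at least $n-9t/4$ honest processors.)
   Context: Setting. $n$ processors indexed by $[1:n]$, pairwise joined by reliable private synchronous channels; recipients know senders. At most $t$ processors are dishonest, controlled by an adversary who may make them deviate arbitrarily (missing values replaced by a fixed default); the others are honest. Processor $i$ holds an $\ell$-bit initial message $\boldsymbol w_i$. $\phi$ is a default value different from every $\ell$-bit message. Logarithms are base 2. Code. $k=\lfloor t/5\rfloor+1$, $c=\lceil \max\{\ell,(t/5+1)\log(n+1)\}/k\rceil$. Messages are zero-padded to $kc$ bits and viewed in $GF(2^c)^k$. Integers in $[1:n]$ are identified with distinct nonzero elements of $GF(2^c)$; $\boldsymbol h_i\in GF(2^c)^k$ has entries $h_{i,j}=\prod_{p\in[1:k],\,p\ne j}\frac{i-p}{j-p}$ (field arithmetic). COOL, Phases 1–3 (honest processor $i$). Initialization: updated message $\boldsymbol w^{(i)}:=\boldsymbol w_i$, $y^{(i)}_j:=\boldsymbol h_j^{\mathsf T}\boldsymbol w_i$, $u_i(i):=1$. Phase 1. (a) Send $(y^{(i)}_j,y^{(i)}_i)$ to each $j\ne i$. (b) For $j\ne i$, link indicator $u_i(j):=1$ if the pair received from $j$ equals $(y^{(i)}_i,y^{(i)}_j)$, else $0$. Success indicator $s_i:=1$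 if $\sum_{j=1}^n u_i(j)\ge n-t$; otherwise $s_i:=0$ and $\boldsymbol w^{(i)}:=\phi$. (c) Send $s_i$ to all; each processor records the indicator received from each $j$ (own for itself) and forms $\mathcal S_1=\{j:s_j=1\}$, $\mathcal S_0=\{j:s_j=0\}$ (views may differ between processors). Phase 2. If $s_i=1$: set $u_i(j):=0$ for all $j\in\mathcal S_0$; if now $\sum_j u_i(j)<n-t$, set $s_i:=0$, $\boldsymbol w^{(i)}:=\phi$ and send $s_i=0$ to all. Everyone overwrites recorded indicators with newly received ones and recomputes $\mathcal S_0,\mathcal S_1$. Phase 3 begins by repeating the steps of Phase 2 once more (followed by a vote and binary agreement, irrelevant here). Notation. For $p\in\{1,2,3\}$, $s^{[p]}_i$ is the value of honest processor $i$'s success indicator at the end of (the indicator-updating steps of) Phase $p$, and $\eta^{[p]}$ is the number of distinct values in $\{\boldsymbol w_i: i\text{ honest},\ s^{[p]}_i=1\}$ (initial messages). *)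

(* Model of COOL Phases 1-2 (success indicators only). *)
From mathcomp Require Import all_boot all_order all_algebra.
Import GRing.Theory.
Local Open Scope ring_scope.

(* Processors are 'I_n; ordinal i stands for processor i+1 of [1:n]. *)

Definition cool_k (t : nat) : nat := (t %/ 5).+1.

(* c * k >= max{l, (t/5+1) log2(n+1)}, written exactly in nat:
   c*k >= (t/5+1) log2(n+1)  <=>  (n+1)^(t+5) <= 2^(5 c k). *)
Definition c_ok (n t l c : nat) : bool :=
  (l <= cool_k t * c)%N && ((n.+1) ^ (t + 5) <= 2 ^ (5 * (cool_k t * c)))%N.

(* c = ceil(max{l,(t/5+1)log(n+1)}/k) : the least c with c_ok. *)
Definition is_cool_c (n t l c : nat) : Prop :=
  c_ok n t l c /\ (forall c', c_ok n t l c' -> (c <= c')%N).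

(* emb a = the field element identified with the integer a (1 <= a <= n).
   lagr k emb x = the vector h with h_j = prod_{p in [1:k], p <> j} (x-p)/(j-p). *)
Definition lagr (F : fieldType) (k : nat) (emb : nat -> F) (x : F) : 'rV[F]_k :=
  \row_(j < k) \prod_(p < k | p != j)
     ((x - emb p.+1) / (emb j.+1 - emb p.+1)).

Definition ycode (F : fieldType) (k n : nat) (emb : nat -> F) (v : 'rV[F]_k)
  (j : 'I_n) : F :=
  \sum_(p < k) (@lagr F k emb (emb j.+1)) 0 p * v 0 p.

Section COOL.
Variables (n t : nat) (F : fieldType) (k : nat) (emb : nat -> F) (M : Type)
  (enc : M -> 'rV[F]_k) (w : 'I_n -> M) (honest : {set 'I_n})
  (adv1 : 'I_n -> 'I_n -> F * F)    (* adv1 j i : pair sent by dishonest j to i in Phase 1(a) *)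
  (advs1 : 'I_n -> 'I_n -> bool).   (* advs1 j i : indicator sent by dishonest j to i in Phase 1(c) *)

Definition cool_y (i j : 'I_n) : F := @ycode F k n emb (enc (w i)) j.

Definition cool_recv1 (i j : 'I_n) : F * F :=
  if j \in honest then (cool_y j i, cool_y j j) else adv1 j i.

Definition cool_u1 (i j : 'I_n) : bool :=
  (j == i) || (cool_recv1 i j == (cool_y i i, cool_y i j)).

Definition cool_s1 (i : 'I_n) : bool :=
  (n - t <= #|[set j | cool_u1 i j]|)%N.

Definition cool_rec1 (i j : 'I_n) : bool :=
  if j == i then cool_s1 i else if j \in honest then cool_s1 j else advs1 j i.

(* s_i^{[2]} : Phase 2 zeroes u_i(j) for j in S_0 (view of i) *)
Definition cool_s2 (i : 'I_n) : bool :=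
  cool_s1 i && (n - t <= #|[set j | cool_u1 i j && cool_rec1 i j]|)%N.

End COOL.

Definition cool_eta2 (n : nat) (M : finType) (w : 'I_n -> M) (honest : {set 'I_n})
  (s2 : 'I_n -> bool) : nat :=
  #|[set w i | i in [set i in honest | s2 i]]|.

(* If honest i accepts the Phase-1 pair of honest j, then h_j^T w_i = h_j^T w_j.
   The vectors h_j are Lagrange bases, so q |-> h_q^T v is a polynomial of
   degree < k = t/5 + 1 evaluated at q, and for distinct messages the two
   codewords agree in fewer than k positions: processors holding different
   messages share at most t/5 honest links.  A processor that succeeds in
   Phase 1 has at least n - 2t honest links, so inclusion-exclusion forbids
   three distinct messages among such processors.  If i still succeeds in
   Phase 2, at least n - 2t of its honest links also succeeded in Phase 1;
   they hold w_i or one single other message w', and those holding w' are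
   zeros of the codeword of w_i - w', hence fewer than k.  So at least
   n - 2t - t/5 >= n - 9t/4 honest processors hold w_i. *)
From mathcomp Require Import all_boot all_order all_algebra.
From mathcomp Require Import zify.
Set Implicit Arguments.
Unset Strict Implicit.
Unset Printing Implicit Defensive.

Import GRing.Theory.
Local Open Scope ring_scope.

Section LagrangeCode.
Variables (F : fieldType) (k n : nat) (e : nat -> F).
Hypothesis le_kn : (k <= n)%N.
Hypothesis e_inj :
  forall a b : nat, (1 <= a <= n)%N -> (1 <= b <= n)%N -> e a = e b -> a = b.

Lemma e_node_inj (a b : nat) : (a < n)%N -> (b < n)%N -> e a.+1 = e b.+1 -> a = b.
Proof. by move=> an bn /e_inj; rewrite an bn => /(_ isT isT) []. Qed.

Lemma lagr_node (m j : 'I_k) : lagr F k e (e m.+1) 0 j = (m == j)%:R.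
Proof.
have lt_n (q : 'I_k) : (q < n)%N by apply: leq_trans (ltn_ord q) le_kn.
rewrite mxE; case: eqP => [<- | /eqP neq_mj]; last first.
  by rewrite (bigD1 m) //= subrr !mul0r.
rewrite big1 // => p neq_pm; rewrite divff // subr_eq0.
apply: contra neq_pm => /eqP /(e_node_inj (lt_n m) (lt_n p)) eq_mp.
exact/eqP/val_inj/esym.
Qed.

Definition lagr_basis (p : 'I_k) : {poly F} :=
  \prod_(q < k | q != p) ((e p.+1 - e q.+1)^-1 *: ('X - (e q.+1)%:P)).

Definition code_poly (v : 'rV[F]_k) : {poly F} :=
  \sum_(p < k) v 0 p *: lagr_basis p.

Lemma horner_code_poly v x :
  (code_poly v).[x] = \sum_(p < k) lagr F k e x 0 p * v 0 p.
Proof.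
rewrite horner_sum; apply: eq_bigr => p _.
rewrite hornerZ horner_prod mxE mulrC; congr (_ * _).
by apply: eq_bigr => q _; rewrite hornerZ hornerXsubC mulrC.
Qed.

Lemma ycode_code_poly v (j : 'I_n) : ycode F k n e v j = (code_poly v).[e j.+1].
Proof. by rewrite horner_code_poly. Qed.

Lemma code_poly_node v (m : 'I_k) : (code_poly v).[e m.+1] = v 0 m.
Proof.
rewrite horner_code_poly (bigD1 m) //= lagr_node eqxx mul1r big1 ?addr0 //.
by move=> q neq_qm; rewrite lagr_node eq_sym (negbTE neq_qm) mul0r.
Qed.

Lemma size_lagr_basis p : (size (lagr_basis p) <= k)%N.
Proof.
apply: leq_trans (size_poly_prod_leq _ _) _.
set S := (X in (X.+1 - _)%N).
have : (S <= #|(fun q : 'I_k => q != p)| * 2)%N.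
  rewrite -sum1_card big_distrl /=; apply: leq_sum => q _; rewrite mul1n.
  by apply: leq_trans (size_scale_leq _ _) _; rewrite size_XsubC.
have -> : #|(fun q : 'I_k => q != p)| = k.-1.
  by rewrite -[in RHS](card_ord k) -(cardC1 p).
have := ltn_ord p; lia.
Qed.

Lemma size_code_poly v : (size (code_poly v) <= k)%N.
Proof.
apply: leq_trans (size_sum _ _ _) _; apply/bigmax_leqP => p _.
exact: leq_trans (size_scale_leq _ _) (size_lagr_basis p).
Qed.

Lemma code_poly_neq0 v : v != 0 -> code_poly v != 0.
Proof.
move=> /eqP neq_v0; apply/eqP => pv0; apply: neq_v0; apply/rowP => m.
by rewrite mxE -code_poly_node pv0 horner0.
Qed.

Definition code_zeros (v : 'rV[F]_k) : {set 'I_n} :=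
  [set j | ycode F k n e v j == 0].

Lemma card_code_zeros v : v != 0 -> (#|code_zeros v| < k)%N.
Proof.
move=> /code_poly_neq0 nz_pv; apply: leq_trans (size_code_poly v).
rewrite cardE -(size_map (fun j : 'I_n => e j.+1)).
apply: max_poly_roots => //.
  by apply/allP => x /mapP[j]; rewrite mem_enum inE ycode_code_poly => zj ->.
rewrite map_inj_uniq ?enum_uniq // => a b /e_node_inj.
by rewrite !ltn_ord => /(_ isT isT) /val_inj.
Qed.

Lemma ycodeB (v1 v2 : 'rV[F]_k) (j : 'I_n) :
  ycode F k n e (v1 - v2) j = ycode F k n e v1 j - ycode F k n e v2 j.
Proof. by rewrite /ycode -sumrB; apply: eq_bigr => p _; rewrite !mxE mulrBr. Qed.

End LagrangeCode.

Lemma card_le_setIC (T : finType) (A H : {set T}) :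
  (#|A| <= #|A :&: H| + #|~: H|)%N.
Proof.
rewrite -(cardsID H A) leq_add2l; apply: subset_leq_card.
by rewrite setDE subsetIr.
Qed.

Lemma card3_le_setU_setI (T : finType) (X Y Z : {set T}) :
  (#|X| + #|Y| + #|Z| <= #|X :|: Y :|: Z| + #|X :&: Y| + #|X :&: Z| + #|Y :&: Z|)%N.
Proof.
have := cardsUI (X :|: Y) Z; have := cardsUI X Y.
have : (#|(X :|: Y) :&: Z| <= #|X :&: Z| + #|Y :&: Z|)%N.
  by rewrite setIUl -cardsUI leq_addr.
lia.
Qed.

Section COOLPhase2.
Variables (n t : nat) (F : fieldType) (emb : nat -> F) (M : eqType)
  (enc : M -> 'rV[F]_(cool_k t)) (w : 'I_n -> M)
  (honest : {set 'I_n})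
  (adv1 : 'I_n -> 'I_n -> F * F) (advs1 : 'I_n -> 'I_n -> bool).

Local Notation k := (cool_k t).
Local Notation y := (cool_y n F k emb _ enc w).
Local Notation u1 := (cool_u1 n F k emb _ enc w honest adv1).
Local Notation s1 := (cool_s1 n t F k emb _ enc w honest adv1).
Local Notation rec1 := (cool_rec1 n t F k emb _ enc w honest adv1 advs1).
Local Notation s2 := (cool_s2 n t F k emb _ enc w honest adv1 advs1).
Local Notation zeros := (@code_zeros F k n emb).

Definition linked (i : 'I_n) : {set 'I_n} := [set j in honest | u1 i j].

Definition confirmed (i : 'I_n) : {set 'I_n} := [set j in linked i | rec1 i j].

Definition agreeing (i : 'I_n) : {set 'I_n} := [set j in honest | w j == w i].

Lemma linked_self (i : 'I_n) : i \in honest -> i \in linked i.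
Proof. by move=> hi; rewrite inE hi /cool_u1 eqxx. Qed.

Lemma cool_y_linked (i j : 'I_n) : j \in linked i -> y i j = y j j.
Proof.
rewrite inE /cool_u1 => /andP[hj]; case: eqP => [-> // | _] /=.
by rewrite /cool_recv1 hj => /eqP [_ ->].
Qed.

Lemma linked_common_sub (i j : 'I_n) :
  linked i :&: linked j \subset zeros (enc (w i) - enc (w j)).
Proof.
apply/subsetP => q; rewrite inE => /andP[qi qj].
rewrite inE ycodeB subr_eq0.
by have := cool_y_linked qi; have := cool_y_linked qj; rewrite /cool_y => -> ->.
Qed.

Lemma cool_s1_card_linked (i : 'I_n) :
  s1 i -> (n - t <= #|linked i| + #|~: honest|)%N.
Proof.
move=> /leq_trans; apply.
rewrite (_ : linked i = [set j | u1 i j] :&: honest) ?card_le_setIC //.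
by apply/setP => j; rewrite !inE andbC.
Qed.

Lemma cool_s2_card_confirmed (i : 'I_n) :
  s2 i -> (n - t <= #|confirmed i| + #|~: honest|)%N.
Proof.
move=> /andP[_ /leq_trans]; apply.
rewrite (_ : confirmed i = [set j | u1 i j && rec1 i j] :&: honest) ?card_le_setIC //.
by apply/setP => j; rewrite !inE -andbA andbC.
Qed.

Lemma confirmed_s1 (i j : 'I_n) : j \in confirmed i -> s1 j.
Proof.
rewrite !inE /cool_rec1 => /andP[/andP[hj _]].
by case: eqP => [-> | _]; rewrite ?hj.
Qed.

Lemma confirmed_linked (i : 'I_n) : confirmed i \subset linked i.
Proof. by apply/subsetP => j; rewrite inE => /andP[]. Qed.

Hypothesis le_3t1_n : (3 * t + 1 <= n)%N.
Hypothesis card_dishonest : (#|~: honest| <= t)%N.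
Hypothesis emb_inj :
  forall a b : nat, (1 <= a <= n)%N -> (1 <= b <= n)%N -> emb a = emb b -> a = b.
Hypothesis enc_inj : injective enc.

Lemma le_k_n : (k <= n)%N.
Proof. rewrite /cool_k; lia. Qed.

Lemma card_zeros_enc (i j : 'I_n) :
  w i != w j -> (#|zeros (enc (w i) - enc (w j))| < k)%N.
Proof.
move=> neq_w; apply: (card_code_zeros le_k_n emb_inj).
by rewrite subr_eq0; apply: contra neq_w => /eqP /enc_inj ->.
Qed.

Lemma card_linked_common (i j : 'I_n) :
  w i != w j -> (#|linked i :&: linked j| < k)%N.
Proof.
move=> neq_w; apply: leq_ltn_trans (card_zeros_enc neq_w).
exact/subset_leq_card/linked_common_sub.
Qed.

Lemma cool_s1_two_messages (a b c : 'I_n) :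
  s1 a -> s1 b -> s1 c -> w a != w b -> w a != w c -> w b = w c.
Proof.
move=> s1a s1b s1c neq_ab neq_ac; apply/eqP/negP => /negP neq_bc.
have card_linked_honest :
    (#|linked a :|: linked b :|: linked c| <= #|honest|)%N.
  by apply/subset_leq_card/subsetP => j; rewrite !inE -!andb_orr => /andP[].
have := card3_le_setU_setI (linked a) (linked b) (linked c).
have := cool_s1_card_linked s1a; have := cool_s1_card_linked s1b.
have := cool_s1_card_linked s1c; have := card_linked_common neq_ab.
have := card_linked_common neq_ac; have := card_linked_common neq_bc.
have := cardsC honest; rewrite card_ord /cool_k; lia.
Qed.

Lemma card_confirmed_disagreeing (i : 'I_n) :
  s1 i -> (#|confirmed i :\: agreeing i| < k)%N.
Proof.
move=> s1i; set D := confirmed i :\: agreeing i.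
have hon (j : 'I_n) : j \in D -> j \in honest.
  by rewrite !inE => /andP[_ /andP[/andP[]]].
have disagree (j : 'I_n) : j \in D -> w i != w j.
  by move=> Dj; move: (Dj); rewrite !inE hon //= eq_sym => /andP[].
have s1D (j : 'I_n) : j \in D -> s1 j.
  by rewrite inE => /andP[_ /confirmed_s1].
have [-> | [j0 Dj0]] := set_0Vmem D; first by rewrite cards0.
apply: leq_ltn_trans (card_zeros_enc (disagree j0 Dj0)).
apply/subset_leq_card/subsetP => j Dj.
have -> : w j0 = w j.
  by apply: (cool_s1_two_messages s1i (s1D _ Dj0) (s1D _ Dj)); apply: disagree.
apply: (subsetP (linked_common_sub i j)); rewrite inE linked_self ?hon // andbT.
by move: Dj; rewrite inE => /andP[_ /(subsetP (confirmed_linked i))].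
Qed.

Lemma cool_s2_card_agreeing (i : 'I_n) :
  s2 i -> (4 * n <= 4 * #|agreeing i| + 9 * t)%N.
Proof.
move=> s2i; have /andP[s1i _] := s2i.
have := cool_s2_card_confirmed s2i; have := card_confirmed_disagreeing s1i.
have := cardsID (agreeing i) (confirmed i).
have : (#|confirmed i :&: agreeing i| <= #|agreeing i|)%N.
  exact/subset_leq_card/subsetIr.
rewrite /cool_k; lia.
Qed.

End COOLPhase2.

Theorem lemma9 (n t l c : nat) (F : finFieldType) (emb : nat -> F)
  (enc : l.-tuple bool -> 'rV[F]_(cool_k t)) (w : 'I_n -> l.-tuple bool)
  (honest : {set 'I_n})
  (adv1 : 'I_n -> 'I_n -> F * F) (advs1 : 'I_n -> 'I_n -> bool) :
  (3 * t + 1 <= n)%N ->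
  is_cool_c n t l c ->
  #|F| = (2 ^ c)%N ->
  (forall a b : nat, (1 <= a <= n)%N -> (1 <= b <= n)%N -> emb a = emb b -> a = b) ->
  (forall a : nat, (1 <= a <= n)%N -> emb a != 0%R) ->
  injective enc ->
  (#|~: honest| <= t)%N ->
  let s2 := @cool_s2 n t F (cool_k t) emb (l.-tuple bool) enc w honest adv1 advs1 in
  (1 <= @cool_eta2 n _ w honest s2)%N ->
  forall i : 'I_n, i \in honest -> s2 i ->
    (4 * n <= 4 * #|[set j in honest | w j == w i]| + 9 * t)%N.
Proof.
move=> le_3t1_n _ _ emb_inj _ enc_inj card_dishonest s2 _ i _ s2i.
exact: (cool_s2_card_agreeing le_3t1_n card_dishonest emb_inj enc_inj s2i).
Qed.
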